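(* Let $r\ge0$, $t\ge0$, $k\ge0$, $\ell\ge1$ be integers. Let $G$ be a graph having an $(H,L)$-partition with width $\ell$, where $H$ is a graph of treewidth at most $t$ and $L$ is a graph with $\Delta(L^r)\le k$. Then every $r$-shallow minor $G'$ of $G$ has a $(J,L^{2r+1})$-partition with width at most $\ell(k+1)$, for some graph $J$ with treewidth at most $\binom{2r+1+t}{t}-1$.
   Context: Graphs are finite, simple, undirected. For a graph $H$, an $H$-partition of a graph $G$ is a partition $(Y_x: x\in V(H))$ of $V(G)$ (parts may be empty) indexed by $V(H)$ such that for every edge $vw\in E(G)$ with $v\in Y_x$, $w\in Y_y$, either $x=y$ or $xy\in E(H)$. An $(H,L)$-partition of $G$ is a pair $(\mathcal{Y},\mathcal{Z})$ consisting of an $H$-partition $\mathcal{Y}=(Y_y)$ and an $L$-partition $\mathcal{Z}=(Z_z)$ of $G$; its width is $\max\{|Y_y\cap Z_z|: y\in V(H), z\in V(L)\}$. For $m\ge0$, $L^m$ has vertex set $V(L)$ with distinct $u,v$ adjacent iff $\mathrm{dist}_L(u,v)\le m$. $G'$ is an $r$-shallow minor of $G$ if there are pairwise vertex-disjoint connected subgraphs $\mu(v)$ ($v\in V(G')$) of $G$, each of radius at most $r$, such that for every $vw\in E(G')$ some edge of $G$ joins $\mu(v)$ and $\mu(w)$. *)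

(* Graphs are finite simple undirected: a relation e on a finType. *)
From mathcomp Require Import all_boot.
Set Implicit Arguments. Unset Strict Implicit. Unset Printing Implicit Defensive.

Definition simple_graph (V : finType) (e : rel V) : Prop :=
  (forall x, ~~ e x x) /\ (forall x y, e x y = e y x).

Fixpoint reach_le (V : finType) (e : rel V) (m : nat) (u v : V) : bool :=
  match m with
  | 0 => u == v
  | m'.+1 => reach_le e m' u v || [exists w, reach_le e m' u w && e w v]
  end.

Definition graph_pow (V : finType) (e : rel V) (m : nat) : rel V :=
  fun u v => (u != v) && reach_le e m u v.

Definition max_deg_le (V : finType) (e : rel V) (k : nat) : Prop :=
  forall v, #|[set w | e v w]| <= k.

(* An H-partition of G, given as the map sending each vertex of G to the
   index of its part (parts Y_x = f^-1(x), possibly empty). *)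
Definition is_partition (VG VH : finType) (eG : rel VG) (eH : rel VH)
  (f : VG -> VH) : Prop :=
  forall v w, eG v w -> f v = f w \/ eH (f v) (f w).

Definition pwidth (VG VH VL : finType) (f : VG -> VH) (g : VG -> VL) : nat :=
  \max_(y : VH) \max_(z : VL) #|[set v | (f v == y) && (g v == z)]|.

Definition induced (V : finType) (e : rel V) (S : {set V}) : rel V :=
  fun a b => [&& e a b, a \in S & b \in S].

Definition is_tree (VT : finType) (eT : rel VT) : Prop :=
  simple_graph eT /\ 0 < #|VT| /\ (forall x y, connect eT x y) /\
  #|[set p : VT * VT | eT p.1 p.2]| = 2 * (#|VT| - 1).

Definition tree_decomposition (V : finType) (e : rel V)
  (VT : finType) (eT : rel VT) (B : VT -> {set V}) : Prop :=
  is_tree eT /\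
  (forall v, exists x, v \in B x) /\
  (forall v w, e v w -> exists x, (v \in B x) && (w \in B x)) /\
  (forall v x y, v \in B x -> v \in B y ->
     connect (induced eT [set z | v \in B z]) x y).

Definition treewidth_le (V : finType) (e : rel V) (w : nat) : Prop :=
  exists (VT : finType) (eT : rel VT) (B : VT -> {set V}),
    tree_decomposition e eT B /\ forall x, #|B x| <= w.+1.

Definition radius_le (V : finType) (e : rel V) (S : {set V}) (r : nat) : Prop :=
  exists2 c, c \in S & forall u, u \in S -> reach_le (induced e S) r c u.

Definition shallow_minor_model (V : finType) (e : rel V) (r : nat)
  (V' : finType) (e' : rel V') (mu : V' -> {set V}) : Prop :=
  (forall v w, v != w -> [disjoint mu v & mu w]) /\
  (forall v, radius_le e (mu v) r) /\
  (forall v w, e' v w -> exists a b, [/\ a \in mu v, b \in mu w & e a b]).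

Definition shallow_minor (V : finType) (e : rel V) (r : nat)
  (V' : finType) (e' : rel V') : Prop :=
  exists mu, shallow_minor_model e r e' mu.

(* Root a tree decomposition of H of width t and order V(H) so that vertices whose
   highest bag is nearer the root come later.  The bag of J at a node y collects the
   vertices b weakly 2r-reachable from the bag of H at y: joined to it by a walk of
   length at most 2r in the chordal completion of H (vertices sharing a bag) through
   vertices preceding b.  These bags again form a tree decomposition, and the
   classical count of weakly reachable sets in graphs of treewidth t bounds them by
   C(2r+1+t, t).  A branch set is sent to the latest vertex of its image in H and to
   the L-part of its centre: an edge of G' becomes a walk of length at most 2r in H
   and at most 2r+1 in L, and a part of the new partition picks at most one vertex
   from each (H,L)-part meeting an r-ball of L, whence the width l(k+1). *)

From mathcomp Require Import all_boot.
From mathcomp Require Import zify.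
Set Implicit Arguments. Unset Strict Implicit. Unset Printing Implicit Defensive.

Section Walks.
Variables (V : finType) (e : rel V).

Lemma reach_le_refl m u : reach_le e m u u.
Proof. by elim: m => [|m IH] /=; rewrite ?eqxx ?IH. Qed.

Lemma reach_leS m u v : reach_le e m u v -> reach_le e m.+1 u v.
Proof. by move=> H /=; rewrite H. Qed.

Lemma reach_le_mono m n u v : m <= n -> reach_le e m u v -> reach_le e n u v.
Proof.
move=> /subnKC <-; elim: (n - m) => [|k IH] H; first by rewrite addn0.
by rewrite addnS; apply/reach_leS/IH.
Qed.

Lemma reach_le_rcons m u w v : reach_le e m u w -> e w v -> reach_le e m.+1 u v.
Proof. by move=> Huw Ewv /=; apply/orP; right; apply/existsP; exists w; apply/andP. Qed.

Lemma reach_le_ind (P : nat -> V -> Prop) u :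
    P 0 u ->
    (forall m w v, reach_le e m u w -> P m w -> e w v -> P m.+1 v) ->
    (forall m v, P m v -> P m.+1 v) ->
  forall m v, reach_le e m u v -> P m v.
Proof.
move=> P0 Pstep PS; elim=> [|m IH] v /=; first by move/eqP <-.
case/orP; first by move/IH/PS.
by case/existsP=> w /andP [Huw Ewv]; apply: Pstep (IH _ Huw) Ewv.
Qed.

Lemma reach_le_cat m n u w v :
  reach_le e m u w -> reach_le e n w v -> reach_le e (m + n) u v.
Proof.
move=> Huw; elim: n v => [|n IH] v /=; first by rewrite addn0 => /eqP <-.
rewrite addnS; case/orP; first by move/IH/reach_leS.
by case/existsP=> x /andP [Hwx Exv]; apply: reach_le_rcons (IH _ Hwx) Exv.
Qed.

Lemma reach_le_cons m u w v : e u w -> reach_le e m w v -> reach_le e m.+1 u v.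
Proof.
move=> Euw; rewrite -add1n; apply: reach_le_cat.
by apply: (@reach_le_rcons 0 u u); rewrite /= ?eqxx.
Qed.

Lemma reach_le_sym : symmetric e -> forall m u v, reach_le e m u v -> reach_le e m v u.
Proof.
move=> e_sym m u v; move: m v; apply: reach_le_ind; first exact: reach_le_refl.
  by move=> m w v _ Hwu Ewv; apply: reach_le_cons Hwu; rewrite e_sym.
by move=> m v /reach_leS.
Qed.

Lemma reach_le_path x p : path e x p -> reach_le e (size p) x (last x p).
Proof.
elim: p x => [|y p IH] x /=; first by rewrite eqxx.
by case/andP=> Exy /IH; apply: reach_le_cons.
Qed.

Lemma reach_le_closed (P : pred V) m u v :
  (forall a b, e a b -> P b) -> reach_le e m u v -> P u -> P v.
Proof. by move=> eP; move: m v; apply: reach_le_ind => // m w v _ _ /eP. Qed.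

Lemma reach_le_eq_or_source (P : pred V) m u v :
  (forall a b, e a b -> P a) -> reach_le e m u v -> u = v \/ P u.
Proof.
move=> eP; move: m v; apply: reach_le_ind => [|m w v _ [<-|Pu] /eP|//]; by [left|right].
Qed.

End Walks.

Lemma reach_le_map (V W : finType) (e : rel V) (e' : rel W) (h : V -> W) :
  (forall a b, e a b -> h a = h b \/ e' (h a) (h b)) ->
  forall m u v, reach_le e m u v -> reach_le e' m (h u) (h v).
Proof.
move=> he m u v; move: m v; apply: reach_le_ind; first exact: reach_le_refl.
  move=> m w v _ Hw /he [<-|E]; [exact: reach_leS | exact: reach_le_rcons Hw E].
by move=> m v /reach_leS.
Qed.

Lemma reach_le_sub (V : finType) (e e' : rel V) :
  subrel e e' -> forall m u v, reach_le e m u v -> reach_le e' m u v.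
Proof. by move=> ee'; apply: reach_le_map => a b /ee'; right. Qed.

Lemma induced_sym (V : finType) (e : rel V) (S : {set V}) :
  symmetric e -> symmetric (induced e S).
Proof. by move=> e_sym a b; rewrite /induced e_sym [X in _ && X]andbC. Qed.

(* N c is the upper neighbourhood of c in a chordal graph with perfect elimination
   ordering key. *)
Section UpwardReach.
Variables (V : finType) (key : V -> nat) (N : V -> {set V}).
Hypothesis key_inj : injective key.
Hypothesis key_N : forall c d, d \in N c -> key c < key d.
Hypothesis N_chain :
  forall c d d', d \in N c -> d' \in N c -> key d < key d' -> d' \in N d.

Fixpoint upreach (D : {set V}) (m : nat) (v : V) : {set V} :=
  if m is m'.+1 then v |: \bigcup_(d in N v :&: D) upreach D m' d else [set v].

Lemma upreach_self D m v : v \in upreach D m v.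
Proof. by case: m => [|m] /=; rewrite ?set11 ?setU11. Qed.

Lemma upreachS D m v : upreach D m v \subset upreach D m.+1 v.
Proof.
elim: m v => [|m IH] v /=; first by rewrite sub1set setU11.
apply/subsetP=> x /setU1P [->|/bigcupP [d Hd Hx]]; first exact: setU11.
by apply/setU1P; right; apply/bigcupP; exists d; last exact: (subsetP (IH d)).
Qed.

Lemma upreach_mono D m n v : m <= n -> upreach D m v \subset upreach D n v.
Proof.
move=> /subnKC <-; elim: (n - m) => [|k IH]; first by rewrite addn0.
by rewrite addnS; apply: subset_trans IH (upreachS _ _ _).
Qed.

Lemma upreach_cons (D : {set V}) m v d x :
  d \in N v -> d \in D -> x \in upreach D m d -> x \in upreach D m.+1 v.
Proof.
move=> dN dD Hx /=; apply/setU1P; right; apply/bigcupP; exists d => //.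
by rewrite inE dN.
Qed.

Lemma upreach_rcons (D : {set V}) m u x w :
  x \in upreach D m u -> w \in N x -> w \in D -> w \in upreach D m.+1 u.
Proof.
move=> + wN wD; elim: m u => [|m IH] u.
  by move=> /set1P <-; apply: (upreach_cons wN wD); apply: upreach_self.
case/setU1P=> [<-|/bigcupP [d Hd Hx]].
  exact: (upreach_cons wN wD (upreach_self _ _ _)).
by apply/setU1P; right; apply/bigcupP; exists d => //; apply: IH.
Qed.

Lemma upreachSP (D : {set V}) m v u : u \in upreach D m.+1 v ->
  u = v \/ exists2 d, d \in N v :&: D & u \in upreach D m d.
Proof. by case/setU1P=> [->|/bigcupP [d Hd Hu]]; [left | right; exists d]. Qed.

Lemma upreach_isolated D m v : N v :&: D = set0 -> upreach D m v = [set v].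
Proof. by case: m => [|m] //= ->; rewrite big_set0 setU0. Qed.

Definition lower_nbrs (D : {set V}) (z : V) :=
  [set c in D | (key c < key z) && (z \in N c)].

Lemma lower_nbrs_sub D z : lower_nbrs D z \subset D.
Proof. by apply/subsetP=> c; rewrite inE => /andP []. Qed.

Lemma upreach_lower_nbrs (D : {set V}) z m w u : w \in lower_nbrs D z ->
  u \in upreach D m w -> u \in upreach (lower_nbrs D z) m w \/ u \in upreach D m z.
Proof.
elim: m w u => [|m IH] w u wD'; first by move=> /set1P ->; left; apply: upreach_self.
case/upreachSP=> [->|[d]]; first by left; apply: upreach_self.
rewrite inE => /andP [dN dD] Hu.
move: (wD'); rewrite inE => /andP [_ /andP [_ zN]].
case: (ltngtP (key d) (key z)) => [dz|zd|/key_inj dz].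
- have dD' : d \in lower_nbrs D z by rewrite inE dD dz (N_chain dN zN dz).
  case: (IH d u dD' Hu) => Hu'; first by left; apply: upreach_cons dN dD' Hu'.
  by right; apply: (subsetP (upreachS _ _ _)).
- by right; apply: (upreach_cons (N_chain zN dN zd) dD Hu).
- by right; rewrite -dz; apply: (subsetP (upreachS _ _ _)).
Qed.

Lemma upreach_split (D : {set V}) m v z :
    z \in N v :&: D -> (forall d, d \in N v :&: D -> key d <= key z) ->
  upreach D m.+1 v \subset upreach (lower_nbrs D z) m.+1 v :|: upreach D m z.
Proof.
rewrite inE => /andP [zN zD] zmax.
apply/subsetP=> u /upreachSP [->|[d dND Hu]]; first by rewrite inE upreach_self.
move: (dND); rewrite inE => /andP [dN dD]; rewrite inE.
case: (ltngtP (key d) (key z)) => [dz|zd|/key_inj dz].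
- have dD' : d \in lower_nbrs D z by rewrite inE dD dz (N_chain dN zN dz).
  case: (upreach_lower_nbrs dD' Hu) => Hu'; last by rewrite Hu' orbT.
  by rewrite (upreach_cons dN dD' Hu').
- by move: (zmax d dND); rewrite leqNgt zd.
- by rewrite -dz Hu orbT.
Qed.

(* Let z be the latest upper neighbour of v.  Upward walks from v either stay among
   the vertices having z as an upper neighbour, where every degree drops by one, or
   go through z with one step fewer; Pascal's rule adds up the two bounds. *)
Lemma card_upreach t m (D : {set V}) v : v \in D ->
  (forall c, c \in D -> #|N c :&: D| <= t) -> #|upreach D m v| <= 'C(m + t, t).
Proof.
elim: t m D v => [|t IHt] m D v vD degD.
  rewrite bin0 upreach_isolated ?cards1 //.
  by apply/eqP; rewrite -cards_eq0 -leqn0 degD.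
elim: m v vD => [|m IHm] v vD; first by rewrite /= cards1 bin_gt0 leq_addl.
have [Nv0|[d0 Hd0]] := set_0Vmem (N v :&: D).
  by rewrite upreach_isolated // cards1 bin_gt0 leq_addl.
have [z zND zmax] : exists2 z, z \in N v :&: D &
    forall d, d \in N v :&: D -> key d <= key z.
  by case: (arg_maxnP key Hd0) => z; exists z.
move: (zND); rewrite inE => /andP [zN zD].
have deg' c : c \in lower_nbrs D z -> #|N c :&: lower_nbrs D z| <= t.
  rewrite inE => /andP [cD /andP [_ zNc]].
  rewrite -ltnS; apply: leq_trans (degD c cD); apply: proper_card.
  apply/properP; split; first by apply: setIS; apply: lower_nbrs_sub.
  by exists z; rewrite !inE ?zNc ?zD // ltnn.
have vD' : v \in lower_nbrs D z by rewrite inE vD zN key_N.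
apply: leq_trans (subset_leq_card (upreach_split m zND zmax)) _.
apply: leq_trans (leq_card_setU _ _) _.
apply: leq_trans (leq_add (IHt m.+1 _ _ vD' deg') (IHm z zD)) _.
by rewrite -addSnnS addnS binS addnC addSn.
Qed.

End UpwardReach.

Section RootedTree.
Variables (VT : finType) (eT : rel VT) (rho : VT).
Hypothesis tree_eT : is_tree eT.

Let eT_sym : symmetric eT := tree_eT.1.2.

Lemma reach_from_root x : exists m, reach_le eT m rho x.
Proof.
case/connectP: (tree_eT.2.2.1 rho x) => p /reach_le_path Hp ->.
by exists (size p).
Qed.

Definition depth x := ex_minn (reach_from_root x).

Lemma depth_reach x : reach_le eT (depth x) rho x.
Proof. by rewrite /depth; case: ex_minnP. Qed.

Lemma depth_min x m : reach_le eT m rho x -> depth x <= m.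
Proof. by rewrite /depth; case: ex_minnP => n _ H /H. Qed.

Lemma depth_root : depth rho = 0.
Proof. by apply/eqP; rewrite -leqn0; apply: depth_min; rewrite /= eqxx. Qed.

Lemma depth_eq0 x : depth x = 0 -> x = rho.
Proof. by move=> H; move: (depth_reach x); rewrite H /= => /eqP. Qed.

Definition parent x := odflt x [pick w | eT w x && (depth w < depth x)].

Lemma parent_spec x : x != rho -> eT (parent x) x /\ depth x = (depth (parent x)).+1.
Proof.
move=> xr; have [w0 Hw0] : exists w, eT w x && (depth w < depth x).
  move: (depth_reach x); case E: (depth x) => [|m].
    by move: (depth_eq0 E) xr => ->; rewrite eqxx.
  case/orP=> [/depth_min|/existsP [w /andP [Hw Ewx]]]; first by rewrite E ltnn.
  by exists w; rewrite Ewx ltnS depth_min.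
rewrite /parent; case: pickP => [w /andP [Ewx Hw]|/(_ w0)]; last by rewrite Hw0.
split=> //; apply/eqP; rewrite eqn_leq Hw andbT.
exact/depth_min/(reach_le_rcons (depth_reach w) Ewx).
Qed.

Lemma parent_root : parent rho = rho.
Proof. by rewrite /parent; case: pickP => [w /andP [_]|//]; rewrite depth_root. Qed.

Lemma depth_parent x : depth (parent x) = (depth x).-1.
Proof.
have [->|xr] := eqVneq x rho; first by rewrite parent_root depth_root.
by case: (parent_spec xr) => _ ->.
Qed.

Lemma depth_iter_parent k x : depth (iter k parent x) = depth x - k.
Proof. by elim: k => [|k IH] /=; rewrite ?subn0 // depth_parent IH subnS. Qed.

Lemma iter_parent_root k x : depth x <= k -> iter k parent x = rho.
Proof.
move=> le_xk; rewrite -(subnK le_xk) iterD.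
have -> : iter (depth x) parent x = rho.
  by apply: depth_eq0; rewrite depth_iter_parent subnn.
by elim: (k - depth x) => //= n ->; rewrite parent_root.
Qed.

Definition ancestor x y := iter (depth y - depth x) parent y == x.

Lemma ancestorP x y : reflect (exists k, iter k parent y = x) (ancestor x y).
Proof.
apply: (iffP eqP) => [H|[k Hk]]; first by exists (depth y - depth x).
have [le_ky|lt_yk] := leqP k (depth y).
  by have -> : depth y - depth x = k by rewrite -Hk depth_iter_parent; lia.
have -> : x = rho by rewrite -Hk iter_parent_root // ltnW.
by rewrite depth_root subn0 iter_parent_root.
Qed.

Lemma ancestor_refl x : ancestor x x.
Proof. by apply/ancestorP; exists 0. Qed.

Lemma ancestor_parent x : ancestor (parent x) x.
Proof. by apply/ancestorP; exists 1. Qed.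

Lemma ancestor_trans x y z : ancestor x y -> ancestor y z -> ancestor x z.
Proof.
move=> /ancestorP [k1 <-] /ancestorP [k2 <-].
by apply/ancestorP; exists (k1 + k2); rewrite iterD.
Qed.

Lemma ancestor_depth x y : ancestor x y -> depth x <= depth y.
Proof. by case/ancestorP=> k <-; rewrite depth_iter_parent leq_subr. Qed.

Lemma ancestor_eq x y : ancestor x y -> depth y <= depth x -> x = y.
Proof.
case/ancestorP=> k <-; rewrite depth_iter_parent => H.
have [le_ky|lt_yk] := leqP k (depth y); first by have -> : k = 0 by lia.
have y0 : depth y = 0 by lia.
by rewrite iter_parent_root ?y0 // (depth_eq0 y0).
Qed.

Lemma ancestor_antisym x y : ancestor x y -> ancestor y x -> x = y.
Proof. by move=> Hxy /ancestor_depth; apply: ancestor_eq. Qed.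

Lemma ancestor_total x x' y :
  ancestor x y -> ancestor x' y -> ancestor x x' \/ ancestor x' x.
Proof.
move=> /ancestorP [k <-] /ancestorP [k' <-]; have [le_kk'|lt_k'k] := leqP k k'.
  by right; apply/ancestorP; exists (k' - k); rewrite -iterD subnK.
by left; apply/ancestorP; exists (k - k'); rewrite -iterD subnK // ltnW.
Qed.

Lemma ancestor_parent_r x y : ancestor x y -> x != y -> ancestor x (parent y).
Proof.
case/ancestorP=> [[|k] <-]; first by rewrite eqxx.
by move=> _; apply/ancestorP; exists k; rewrite -iterSr.
Qed.

Lemma ancestor_of_parent x y : ancestor x (parent y) -> ancestor x y.
Proof. by move/ancestor_trans; apply; apply: ancestor_parent. Qed.

(* The n - 1 parent edges x -- parent x (x <> rho) are distinct and, read in both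
   directions, already account for all 2 (n - 1) ordered adjacent pairs. *)
Lemma tree_edge_parent x y : eT x y ->
  (x != rho /\ parent x = y) \/ (y != rho /\ parent y = x).
Proof.
move=> Exy; set A := [set p : VT * VT | eT p.1 p.2]; set S := [set~ rho].
set P1 := [set (z, parent z) | z in S]; set P2 := [set (parent z, z) | z in S].
have subA : P1 :|: P2 \subset A.
  apply/subsetP=> p; rewrite !inE => /orP [] /imsetP [z]; rewrite !inE => zr ->;
    by case: (parent_spec zr) => Ez _ //=; rewrite eT_sym.
have cardP1 : #|P1| = #|S| by apply: card_in_imset => a b _ _ [].
have cardP2 : #|P2| = #|S| by apply: card_in_imset => a b _ _ [].
have disP : [disjoint P1 & P2].
  apply/pred0P=> p /=; apply/negP.
  move=> /andP [/imsetP [a + ->] /imsetP [b + [Eab Eba]]].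
  rewrite !inE => /parent_spec [_ Da] /parent_spec [_ Db].
  by move: Da Db; rewrite Eba -Eab; lia.
have cardS : #|S| = #|VT| - 1 by rewrite cardsC1 subn1.
have cardA : #|P1 :|: P2| = #|A|.
  rewrite tree_eT.2.2.2 cardsU (disjoint_setI0 disP) cards0 subn0 cardP1 cardP2.
  by rewrite cardS; lia.
have EA : P1 :|: P2 = A by apply/eqP; rewrite eqEcard subA cardA leqnn.
have : (x, y) \in A by rewrite inE.
by rewrite -EA !inE => /orP [] /imsetP [z]; rewrite !inE => zr [-> ->]; [left|right].
Qed.

Lemma path_exit (e : rel VT) x u p : path e u p -> ancestor x u ->
  ~~ ancestor x (last u p) -> exists d y, [/\ e d y, ancestor x d & ~~ ancestor x y].
Proof.
elim: p u => [|y p IH] u /=; first by move=> _ ->.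
case/andP=> Euy Hp Hu; have [Hy|nHy] := boolP (ancestor x y); first exact: IH.
by move=> _; exists u, y.
Qed.

End RootedTree.

Section TopBag.
Variables (VH : finType) (eH : rel VH) (VT : finType) (eT : rel VT) (rho : VT).
Variable B : VT -> {set VH}.
Hypothesis td : tree_decomposition eH eT B.

Let tree_eT : is_tree eT := td.1.
Local Notation depth := (depth rho tree_eT).
Local Notation parent := (parent rho tree_eT).
Local Notation ancestor := (ancestor rho tree_eT).

Definition top_bag c := [arg min_(x < xchoose (td.2.1 c) | c \in B x) depth x].

Lemma top_bag_spec c :
  c \in B (top_bag c) /\ forall y, c \in B y -> depth (top_bag c) <= depth y.
Proof. by rewrite /top_bag; case: (arg_minnP depth (xchooseP (td.2.1 c))). Qed.

Lemma top_bag_in c : c \in B (top_bag c).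
Proof. by case: (top_bag_spec c). Qed.

Lemma top_bag_min c y : c \in B y -> depth (top_bag c) <= depth y.
Proof. by case: (top_bag_spec c) => _; apply. Qed.

(* The bags containing c span a subtree; a path in it from x to top_bag c must
   leave the subtree below x, which it can only do through the parent of x. *)
Lemma bag_parent c x : c \in B x -> x != top_bag c -> c \in B (parent x).
Proof.
move=> cx xtop.
case/connectP: (td.2.2.2 c x (top_bag c) cx (top_bag_in c)) => p Hp Elast.
have ntop : ~~ ancestor x (top_bag c).
  by apply: contra xtop => /ancestor_eq /(_ (top_bag_min cx)) ->.
case: (path_exit Hp (ancestor_refl rho tree_eT x)); first by rewrite -Elast.
move=> d [y [/and3P [Edy]]]; rewrite !inE => cd cy xd nxy.
case: (tree_edge_parent rho tree_eT Edy) => [[_ Pd]|[_ Py]].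
  have [<-|dx] := eqVneq d x; first by rewrite Pd.
  by move: nxy; rewrite -Pd (ancestor_parent_r xd) // eq_sym.
by move: xd; rewrite -Py => /ancestor_of_parent; rewrite (negbTE nxy).
Qed.

Lemma top_bag_ancestor c x : c \in B x -> ancestor (top_bag c) x.
Proof.
elim: {x}(depth x) {-2}x (leqnn (depth x)) => [|n IH] x le_xn cx.
  have x0 : depth x = 0 by lia.
  have t0 : depth (top_bag c) = 0 by move: (top_bag_min cx); lia.
  by rewrite (depth_eq0 x0) (depth_eq0 t0); apply: ancestor_refl.
have [->|xtop] := eqVneq x (top_bag c); first exact: ancestor_refl.
have [xr|] := eqVneq x rho.
  have t0 : depth (top_bag c) = 0.
    by move: (top_bag_min cx); rewrite xr depth_root; lia.
  by rewrite xr -(depth_eq0 t0) ancestor_refl.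
move=> /(parent_spec tree_eT) [_ Dx].
apply/ancestor_of_parent/(IH _ _ (bag_parent cx xtop)).
by rewrite Dx in le_xn.
Qed.

Lemma bag_between c z x :
  ancestor (top_bag c) z -> ancestor z x -> c \in B x -> c \in B z.
Proof.
elim: {x}(depth x) {-2}x (leqnn (depth x)) => [|n IH] x le_xn tz zx cx.
  by rewrite (ancestor_eq zx) //; lia.
have [->//|zx'] := eqVneq z x.
have xtop : x != top_bag c.
  by apply: contra zx' => /eqP xt; apply/eqP/(ancestor_antisym zx); rewrite xt.
have [xr|] := eqVneq x rho.
  by move: zx'; rewrite (ancestor_eq zx) ?eqxx // xr depth_root.
move=> /(parent_spec tree_eT) [_ Dx].
apply: IH tz (ancestor_parent_r zx zx') (bag_parent cx xtop).
by rewrite Dx in le_xn.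
Qed.

End TopBag.

Section WeakReachability.
Variables (VH : finType) (eH : rel VH) (VT : finType) (eT : rel VT) (rho : VT).
Variable B : VT -> {set VH}.
Hypothesis td : tree_decomposition eH eT B.

Let tree_eT : is_tree eT := td.1.
Local Notation depth := (depth rho tree_eT).
Local Notation parent := (parent rho tree_eT).
Local Notation ancestor := (ancestor rho tree_eT).
Local Notation top := (top_bag rho td).

(* Later vertices have their top bag nearer the root; enum_rank breaks ties. *)
Definition key c := (\max_(x : VT) depth x - depth (top c)) * #|VH| + enum_rank c.

Lemma key_inj : injective key.
Proof.
move=> a b /(congr1 (modn^~ #|VH|)).
by rewrite /key !modnMDl !modn_small // => /val_inj/enum_rank_inj.
Qed.

Lemma key_top_depth a b : key a <= key b -> depth (top b) <= depth (top a).
Proof.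
rewrite /key; set D := \max_(x : VT) depth x => le_ab.
have Db : depth (top b) <= D by apply: (leq_bigmax (top b)).
rewrite leqNgt; apply/negP => lt_ab.
have : (D - depth (top b)).+1 * #|VH| <= (D - depth (top a)) * #|VH|.
  by apply: leq_mul => //; lia.
have rb : enum_rank b < #|VH| := ltn_ord _.
move: le_ab rb; rewrite mulSn; set P := _ * #|VH|; set Q := _ * #|VH|; lia.
Qed.

Definition share a b := [exists x, (a \in B x) && (b \in B x)].

Lemma share_bag a b x : a \in B x -> b \in B x -> share a b.
Proof. by move=> ax bx; apply/existsP; exists x; rewrite ax bx. Qed.

Lemma shareP a b : share a b -> exists x, a \in B x /\ b \in B x.
Proof. by case/existsP=> x /andP [ax bx]; exists x. Qed.

Lemma share_sym a b : share a b -> share b a.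
Proof. by case/shareP=> x [ax bx]; apply: share_bag bx ax. Qed.

Lemma share_refl a : share a a.
Proof. by case: (td.2.1 a) => x ax; apply: (share_bag ax ax). Qed.

Lemma share_edge a b : eH a b -> share a b.
Proof. by case/(td.2.2.1 a b)=> x /andP [ax bx]; apply: share_bag ax bx. Qed.

Definition share_below (K : nat) : rel VH :=
  fun a b => [&& key a <= K, key b <= K & share a b].

Lemma share_below_key K m u v :
  reach_le (share_below K) m u v -> u = v \/ key u <= K.
Proof.
by apply: (reach_le_eq_or_source (P := fun c => key c <= K)) => a b /and3P [].
Qed.

Lemma share_below_key_closed K m u v :
  reach_le (share_below K) m u v -> key u <= K -> key v <= K.
Proof. by apply: (reach_le_closed (P := fun c => key c <= K)) => a b /and3P []. Qed.

Lemma share_top_ancestor x w z :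
  share x w -> ancestor z (top x) -> ancestor z (top w) \/ w \in B z.
Proof.
case/shareP=> q [xq wq] zx; have zq := ancestor_trans zx (top_bag_ancestor rho td xq).
case: (ancestor_total zq (top_bag_ancestor rho td wq)) => [|wz]; first by left.
by right; apply: bag_between wz zq wq.
Qed.

Lemma share_below_top_ancestor M j x :
  reach_le (share_below (key M)) j M x -> ancestor (top M) (top x).
Proof.
move: j x; apply: reach_le_ind => [|m w v _ Mw /and3P [_ vM wv]|//].
  exact: ancestor_refl.
case: (share_top_ancestor wv Mw) => // /(top_bag_ancestor rho td) vM'.
by rewrite (ancestor_eq vM' (key_top_depth vM)) ancestor_refl.
Qed.

Lemma share_below_exit M j x w : reach_le (share_below (key M)) j M x ->
  share x w -> key M < key w -> w \in B (top M).
Proof.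
move=> Mx xw Mw; case: (share_top_ancestor xw (share_below_top_ancestor Mx)) => // Mw'.
by rewrite (ancestor_eq Mw' (key_top_depth (ltnW Mw))) top_bag_in.
Qed.

(* Bags separate the tree decomposition: a walk from the subtree below z to
   outside of it must meet the bag at z. *)
Lemma share_below_enter_bag K z j u w : reach_le (share_below K) j u w ->
    ancestor z (top u) \/ u \in B z -> ~~ ancestor z (top w) \/ w \in B z ->
  exists2 c, c \in B z & reach_le (share_below K) j c w.
Proof.
move=> + Hu; move: j w; apply: reach_le_ind.
- by case=> [nzu|uz]; [case: Hu => [zu|]; first by rewrite zu in nzu|];
    exists u => //; apply: reach_le_refl.
- move=> m w v _ IH /and3P [Kw Kv wv] Hv.
  have [vz|vz] := boolP (v \in B z); first by exists v => //; apply: reach_le_refl.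
  have nzv : ~~ ancestor z (top v) by case: Hv => // vz'; rewrite vz' in vz.
  have nzw : ~~ ancestor z (top w).
    apply/negP=> /(share_top_ancestor wv) [zv|vz'].
      by rewrite zv in nzv.
    by rewrite vz' in vz.
  case: (IH (or_introl nzw)) => c cz cw; exists c => //.
  by apply: reach_le_rcons cw _; rewrite /share_below Kw Kv wv.
- by move=> m v IH /IH [c cz cv]; exists c => //; apply: reach_leS.
Qed.

Definition upper c := [set d | share c d && (key c < key d)].

Lemma key_upper c d : d \in upper c -> key c < key d.
Proof. by rewrite inE => /andP []. Qed.

Lemma upper_top_bag c d : d \in upper c -> d \in B (top c).
Proof.
rewrite inE => /andP [cd lt_cd].
by apply: (share_below_exit (j := 0) _ cd lt_cd); rewrite /= eqxx.
Qed.

Lemma upper_chain c d d' :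
  d \in upper c -> d' \in upper c -> key d < key d' -> d' \in upper d.
Proof.
move=> cd cd' lt_dd'; rewrite inE lt_dd' andbT.
exact: share_bag (upper_top_bag cd) (upper_top_bag cd').
Qed.

Local Notation upreach := (upreach upper setT).

Lemma upreach_top_ancestor m c d : d \in upreach m c -> ancestor (top d) (top c).
Proof.
elim: m c => [|m IH] c; first by move=> /set1P ->; apply: ancestor_refl.
case/upreachSP=> [->|[d' + /IH]]; first exact: ancestor_refl.
rewrite inE => /andP [/upper_top_bag/(top_bag_ancestor rho td) cd' _].
by move/ancestor_trans; apply.
Qed.

(* Cut the walk at its successive key records: they form an upward chain from u,
   and the last record bounds the keys on the rest of the walk. *)
Lemma share_below_records K k u w :
  reach_le (share_below K) k u w -> key u <= K ->
  exists M i, [/\ i <= k, M \in upreach i u, key M <= K &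
     reach_le (share_below (key M)) (k - i) M w].
Proof.
move=> + Ku; move: k w; apply: reach_le_ind.
- by exists u, 0; split=> //; [apply: set11 | apply: reach_le_refl].
- move=> k x w _ [M [i [ik Mu KM Mx]]] /and3P [_ Kw xw].
  have [wM|Mw] := leqP (key w) (key M).
    exists M, i; split=> //; first exact: leqW.
    have xM := share_below_key_closed Mx (leqnn _).
    by rewrite subSn //; apply: reach_le_rcons Mx _; rewrite /share_below xM wM xw.
  have wN : w \in upper M.
    by rewrite inE Mw (share_bag (top_bag_in rho td M) (share_below_exit Mx xw Mw)).
  exists w, i.+1; split=> //; first by apply: upreach_rcons Mu wN _; rewrite inE.
  by rewrite subSS; apply: reach_le_refl.
- move=> k w [M [i [ik Mu KM Mw]]]; exists M, i; split=> //; first exact: leqW.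
  by apply: reach_le_mono Mw; lia.
Qed.

Lemma share_below_upreach k p b :
  reach_le (share_below (key b)) k p b -> key p <= key b -> b \in upreach k p.
Proof.
move=> pb /(share_below_records pb) [M [i [ik Mp bM Mb]]].
have MbE : M = b.
  by apply: key_inj; apply/eqP; rewrite eqn_leq bM (share_below_key_closed Mb).
by rewrite -MbE; apply: (subsetP (upreach_mono _ _ _ ik)).
Qed.

Definition wbag s y :=
  [set b | [exists p, (p \in B y) && reach_le (share_below (key b)) s p b]].

Lemma wbag_top s b : b \in wbag s (top b).
Proof. by rewrite inE; apply/existsP; exists b; rewrite top_bag_in reach_le_refl. Qed.

Lemma wbagP s y b : b \in wbag s y ->
  exists p, [/\ p \in B y, key p <= key b & reach_le (share_below (key b)) s p b].
Proof.
rewrite inE => /existsP [p /andP [py pb]]; exists p; split=> //.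
by case: (share_below_key pb) => [->|].
Qed.

Lemma wbag_ancestor s y b : b \in wbag s y -> ancestor (top b) y.
Proof.
case/wbagP=> p [py kpb /share_below_upreach /(_ kpb)/upreach_top_ancestor bp].
exact: ancestor_trans bp (top_bag_ancestor rho td py).
Qed.

Lemma wbag_parent s y b : b \in wbag s y -> y != top b -> b \in wbag s (parent y).
Proof.
move=> yb ytop; case/wbagP: (yb) => p [py _ pb].
have top_b_y := wbag_ancestor yb; have yy := ancestor_parent rho tree_eT y.
case: (share_below_enter_bag (z := parent y) pb).
- case: (ancestor_total yy (top_bag_ancestor rho td py)); first by left.
  by right; apply: bag_between _ yy py.
- have [pyb|] := boolP (ancestor (parent y) (top b)); last by left.
  right; have -> : parent y = top b.
    by apply: (ancestor_antisym pyb); apply: ancestor_parent_r; rewrite // eq_sym.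
  exact: top_bag_in.
- by move=> c cy cb; rewrite inE; apply/existsP; exists c; rewrite cy cb.
Qed.

Lemma card_upper t c : (forall x, #|B x| <= t.+1) -> #|upper c| <= t.
Proof.
move=> bag_size; have sub : upper c \subset B (top c) :\ c.
  apply/subsetP=> d cd; rewrite !inE (upper_top_bag cd) andbT.
  by apply: contraTneq (key_upper cd) => ->; rewrite ltnn.
apply: leq_trans (subset_leq_card sub) _.
by move: (bag_size (top c)); rewrite (cardsD1 c) top_bag_in add1n ltnS.
Qed.

Lemma wbag_sub_upreach s y beta : beta \in B y ->
  (forall d, d \in B y -> key beta <= key d) -> wbag s y \subset upreach s.+1 beta.
Proof.
move=> betay betamin; apply/subsetP=> b /wbagP [p [py kpb]].
move=> /share_below_upreach /(_ kpb) bp.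
have [<-|pbeta] := eqVneq p beta; first exact: (subsetP (upreachS _ _ _ _)).
apply: (upreach_cons (d := p)) bp; last by rewrite inE.
rewrite inE (share_bag betay py) ltn_neqAle betamin // andbT.
by apply: contra pbeta => /eqP/key_inj ->.
Qed.

Lemma card_wbag t s y : (forall x, #|B x| <= t.+1) -> #|wbag s y| <= 'C(s.+1 + t, t).
Proof.
move=> bag_size; have [By0|[b0 b0y]] := set_0Vmem (B y).
  suff -> : wbag s y = set0 by rewrite cards0.
  by apply/setP=> b; rewrite in_set0; apply/negP => /wbagP [p [+ _ _]]; rewrite By0 inE.
have [beta betay betamin] := arg_minnP key b0y.
apply: leq_trans (subset_leq_card (wbag_sub_upreach s betay betamin)) _.
apply: (card_upreach key_inj key_upper upper_chain); first by rewrite inE.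
by move=> c _; rewrite setIT; apply: card_upper.
Qed.

Lemma wbag_connect s b x :
  b \in wbag s x -> connect (induced eT [set z | b \in wbag s z]) x (top b).
Proof.
elim: {x}(depth x) {-2}x (leqnn (depth x)) => [|n IH] x le_xn xb.
  by rewrite (ancestor_eq (wbag_ancestor xb)) ?connect0 //; lia.
have [->|xtop] := eqVneq x (top b); first exact: connect0.
have xr : x != rho.
  apply: contra xtop => /eqP xr; apply/eqP/esym/(ancestor_eq (wbag_ancestor xb)).
  by rewrite xr depth_root.
case: (parent_spec tree_eT xr) => Ex Dx.
apply: (connect_trans (y := parent x)).
  apply/connect1/and3P; split; first by rewrite tree_eT.1.2.
    by rewrite in_set.
  by rewrite in_set; apply: wbag_parent.
by apply: IH (wbag_parent xb xtop); rewrite Dx in le_xn.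
Qed.

Definition wbag_rel s : rel VH :=
  fun a b => (a != b) && [exists y, (a \in wbag s y) && (b \in wbag s y)].

Lemma simple_wbag_rel s : simple_graph (wbag_rel s).
Proof.
split=> [x|x y]; first by rewrite /wbag_rel eqxx.
rewrite /wbag_rel eq_sym; congr (_ && _).
by apply/existsP/existsP=> [] [z Hz]; exists z; rewrite andbC.
Qed.

Lemma treewidth_wbag_rel t s : (forall x, #|B x| <= t.+1) ->
  treewidth_le (wbag_rel s) ('C(s.+1 + t, t) - 1).
Proof.
move=> bag_size; exists VT, eT, (wbag s); split; last first.
  move=> x; rewrite subn1 prednK ?bin_gt0 ?leq_addl //.
  exact: card_wbag.
split; first exact: tree_eT.
split; first by move=> b; exists (top b); apply: wbag_top.
split; first by move=> a b /andP [_ /existsP [y Hy]]; exists y.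
move=> b x y xb yb; apply: connect_trans (wbag_connect xb) _.
by rewrite sym_connect_sym; [apply: wbag_connect | apply/induced_sym/tree_eT.1.2].
Qed.

End WeakReachability.

Lemma leq_card_bigcup (I T : finType) (A : {set I}) (F : I -> {set T}) :
  #|\bigcup_(i in A) F i| <= \sum_(i in A) #|F i|.
Proof.
elim/big_rec2: _ => [|i m S _ le_Sm]; first by rewrite cards0.
by apply: leq_trans (leq_card_setU _ _) _; rewrite leq_add2l.
Qed.

Lemma card_part_le_pwidth (V VH VL : finType) (f : V -> VH) (g : V -> VL) y z :
  #|[set v | (f v == y) && (g v == z)]| <= pwidth f g.
Proof.
set part := fun y z => #|[set v | (f v == y) && (g v == z)]|.
apply: leq_trans (leq_bigmax (F := fun y => \max_z part y z) y).
exact: (leq_bigmax (F := part y)).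
Qed.

Lemma card_ball (VL : finType) (eL : rel VL) r k z :
  max_deg_le (graph_pow eL r) k -> #|[set z' | reach_le eL r z z']| <= k.+1.
Proof.
move=> deg.
have sub : [set z' | reach_le eL r z z'] \subset z |: [set w | graph_pow eL r z w].
  apply/subsetP=> z'; rewrite !inE => zz'.
  by have [//|ne] := eqVneq z' z; rewrite /graph_pow eq_sym ne.
apply: leq_trans (subset_leq_card sub) _; apply: leq_trans (leq_card_setU _ _) _.
by rewrite cards1 add1n ltnS.
Qed.

Section BranchSets.
Variables (r : nat) (VG : finType) (eG : rel VG) (VG' : finType) (eG' : rel VG').
Variable mu : VG' -> {set VG}.
Hypothesis eG_sym : symmetric eG.
Hypothesis model : shallow_minor_model eG r eG' mu.

Lemma center_ex v : exists c,
  (c \in mu v) && [forall u in mu v, reach_le (induced eG (mu v)) r c u].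
Proof. by case: (model.2.1 v) => c cv /forall_inP cu; exists c; rewrite cv. Qed.

Definition center v := xchoose (center_ex v).

Lemma center_in v : center v \in mu v.
Proof. by case/andP: (xchooseP (center_ex v)). Qed.

Lemma center_reach v u : u \in mu v -> reach_le (induced eG (mu v)) r (center v) u.
Proof. by case/andP: (xchooseP (center_ex v)) => _ /forall_inP; apply. Qed.

Lemma center_reach_le v u : u \in mu v -> reach_le eG r (center v) u.
Proof. by move/center_reach; apply: reach_le_sub => a b /and3P []. Qed.

Lemma branch_walk v a b : a \in mu v -> b \in mu v ->
  reach_le (induced eG (mu v)) (2 * r) a b.
Proof.
move=> av bv; rewrite mul2n -addnn; apply: (reach_le_cat (w := center v)).
  exact: reach_le_sym (induced_sym _ eG_sym) _ _ _ (center_reach av).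
exact: center_reach.
Qed.

Lemma center_partition (VL : finType) (eL : rel VL) (g : VG -> VL) :
    is_partition eG eL g ->
  is_partition eG' (graph_pow eL (2 * r + 1)) (fun v => g (center v)).
Proof.
move=> hg v w /model.2.2 [a [b [av bw Eab]]].
have ab := reach_le_cat (reach_le_rcons (center_reach_le av) Eab)
  (reach_le_sym eG_sym (center_reach_le bw)).
have [->|ne] := eqVneq (g (center v)) (g (center w)); first by left.
right; rewrite /graph_pow ne; apply: reach_le_map hg _ _ _ _.
by apply: reach_le_mono ab; rewrite addn1 addSn mul2n addnn.
Qed.

(* Choosing in each branch set a vertex mapped to f' v injects a part of the new
   partition into the (H,L)-parts whose L-index lies in an r-ball of L. *)
Lemma pwidth_minor (VH VL : finType) (eL : rel VL) (f : VG -> VH) (g : VG -> VL)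
    (f' : VG' -> VH) k :
    is_partition eG eL g -> max_deg_le (graph_pow eL r) k ->
    (forall v, f' v \in f @: mu v) ->
  pwidth f' (fun v => g (center v)) <= pwidth f g * k.+1.
Proof.
move=> hg deg f'_in; apply/bigmax_leqP => y _; apply/bigmax_leqP => z _.
set S := [set v | (f' v == y) && (g (center v) == z)].
have rep_ex v : exists u, (u \in mu v) && (f u == f' v).
  by case/imsetP: (f'_in v) => u uv ->; exists u; rewrite uv eqxx.
pose rep v := xchoose (rep_ex v).
have [rep_in rep_f] : (forall v, rep v \in mu v) /\ (forall v, f (rep v) = f' v).
  by split=> v; case/andP: (xchooseP (rep_ex v)) => // _ /eqP.
set ball := [set z' | reach_le eL r z z'].
have sub : rep @: S \subset \bigcup_(z' in ball) [set u | (f u == y) && (g u == z')].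
  apply/subsetP=> u /imsetP [v]; rewrite inE => /andP [/eqP fv /eqP gv] ->.
  apply/bigcupP; exists (g (rep v)); last by rewrite inE rep_f fv !eqxx.
  by rewrite inE -gv; apply: reach_le_map hg _ _ _ (center_reach_le (rep_in v)).
have rep_inj : {in S &, injective rep}.
  move=> v w _ _ Evw; apply/eqP; apply: contraT.
  by move=> /model.1 /disjointFr /(_ (rep_in v)); rewrite Evw rep_in.
rewrite -(card_in_imset rep_inj); apply: leq_trans (subset_leq_card sub) _.
apply: leq_trans (leq_card_bigcup _ _) _.
apply: (@leq_trans (\sum_(z' in ball) pwidth f g)).
  by apply: leq_sum => z' _; apply: card_part_le_pwidth.
by rewrite sum_nat_const mulnC leq_mul2l card_ball ?orbT.
Qed.

End BranchSets.

Section Representative.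
Variables (r : nat) (VG : finType) (eG : rel VG) (VH : finType) (eH : rel VH).
Variable f : VG -> VH.
Hypothesis hf : is_partition eG eH f.
Variables (VT : finType) (eT : rel VT) (rho : VT) (B : VT -> {set VH}).
Hypothesis td : tree_decomposition eH eT B.
Variables (VG' : finType) (eG' : rel VG') (mu : VG' -> {set VG}).
Hypothesis eG_sym : symmetric eG.
Hypothesis model : shallow_minor_model eG r eG' mu.

Local Notation key := (key rho td).
Local Notation top := (top_bag rho td).
Local Notation share_below := (share_below rho td).
Local Notation ancestor := (ancestor rho td.1).

Definition rep v := [arg max_(a > f (center model v) in f @: mu v) key a].

Lemma rep_spec v :
  rep v \in f @: mu v /\ forall a, a \in f @: mu v -> key a <= key (rep v).
Proof. by rewrite /rep; case: arg_maxnP => //; apply/imset_f/center_in. Qed.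

Lemma branch_share_below v a b : a \in mu v -> b \in mu v ->
  reach_le (share_below (key (rep v))) (2 * r) (f a) (f b).
Proof.
move=> av bv; apply: reach_le_map (branch_walk eG_sym model av bv).
move=> x y /and3P [Exy xv yv].
have [->|Hxy] := hf Exy; first by left.
right; apply/and3P; split; [| |exact: (share_edge td Hxy)];
  by apply: (proj2 (rep_spec v)); apply: imset_f.
Qed.

(* The branch set of w keeps f b below top (rep w); from there the image of a walk
   from a to a preimage of rep v, which stays below rep v by the choice of rep v,
   must enter the bag at top (rep w). *)
Lemma rep_wbag v w : eG' v w -> key (rep w) <= key (rep v) ->
  rep v \in wbag rho td (2 * r) (top (rep w)).
Proof.
case/model.2.2=> a [b [av bw Eab]] le_wv.
case: (rep_spec w) => /imsetP [uw uww Euw] _.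
case: (rep_spec v) => /imsetP [uv uvv Euv] _.
have wb : ancestor (top (rep w)) (top (f b)).
  by have := branch_share_below uww bw; rewrite -Euw; apply: share_below_top_ancestor.
have ba : share B (f b) (f a).
  by have [->|/(share_edge td)/share_sym //] := hf Eab; apply: (share_refl td).
have walk_av : reach_le (share_below (key (rep v))) (2 * r) (f a) (rep v).
  by have := branch_share_below av uvv; rewrite -Euv.
case: (share_below_enter_bag (z := top (rep w)) walk_av).
- by case: (share_top_ancestor ba wb); [left|right].
- have [wv|] := boolP (ancestor (top (rep w)) (top (rep v))); last by left.
  by right; rewrite (ancestor_eq wv (key_top_depth le_wv)) top_bag_in.
- by move=> c cw cv; rewrite inE; apply/existsP; exists c; rewrite cw cv.
Qed.

Lemma rep_partition :
  symmetric eG' -> is_partition eG' (wbag_rel rho td (2 * r)) rep.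
Proof.
move=> eG'_sym v w Evw; have [->|ne] := eqVneq (rep v) (rep w); first by left.
right; rewrite /wbag_rel ne; apply/existsP.
have [le_wv|/ltnW le_vw] := leqP (key (rep w)) (key (rep v)).
  by exists (top (rep w)); rewrite (rep_wbag Evw le_wv) wbag_top.
rewrite eG'_sym in Evw.
by exists (top (rep v)); rewrite (rep_wbag Evw le_vw) wbag_top.
Qed.

End Representative.

Theorem lemma10 (r t k l : nat) (hl : 1 <= l)
  (VG : finType) (eG : rel VG) (VH : finType) (eH : rel VH)
  (VL : finType) (eL : rel VL)
  (sG : simple_graph eG) (sH : simple_graph eH) (sL : simple_graph eL)
  (f : VG -> VH) (g : VG -> VL)
  (hf : is_partition eG eH f) (hg : is_partition eG eL g)
  (hw : pwidth f g = l)
  (htw : treewidth_le eH t)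
  (hdeg : max_deg_le (graph_pow eL r) k) :
  forall (VG' : finType) (eG' : rel VG'), simple_graph eG' ->
    shallow_minor eG r eG' ->
    exists (VJ : finType) (eJ : rel VJ),
      simple_graph eJ /\ treewidth_le eJ ('C(2 * r + 1 + t, t) - 1) /\
      exists (f' : VG' -> VJ) (g' : VG' -> VL),
        [/\ is_partition eG' eJ f', is_partition eG' (graph_pow eL (2 * r + 1)) g'
          & pwidth f' g' <= l * (k + 1)].
Proof.
move=> VG' eG' sG' [mu model].
case: htw => VT [eT [B [td bag_size]]].
have /card_gt0P [rho _] : 0 < #|VT| by case: td => [[_ []]].
exists VH, (wbag_rel rho td (2 * r)); split; first exact: simple_wbag_rel.
split; first by rewrite addn1; apply: treewidth_wbag_rel.
exists (rep f rho td model), (fun v => g (center model v)); split.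
- exact: (rep_partition hf rho td sG.2 model sG'.2).
- exact: (center_partition sG.2 model hg).
- rewrite -hw addn1; apply: (pwidth_minor model hg hdeg) => v.
  exact: (rep_spec f rho td model v).1.
Qed.
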